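(* Let $G$ be a groupoid (a small category in which every morphism is an isomorphism) and let $X$ be a set equipped with a partial function ${\rm mor}(G)\times X\to X$, $(g,x)\mapsto g\cdot x$ where defined. Then this is a partial category action, i.e. satisfies (C1)–(C3) below, if and only if it is a partial groupoid action, i.e. satisfies (GR1)–(GR3) below.
   Context: Conventions: objects are identified with their identity morphisms, so ${\rm ob}(G)\subseteq{\rm mor}(G)$; $d(g), c(g)$ are domain and codomain, $G^2=\{(g,h)\mid d(g)=c(h)\}$, and $g^{-1}$ is the inverse of $g$. Axioms: (C1) = (GR1): for every $x\in X$ there is $e\in{\rm ob}(G)$ with $e\cdot x$ defined, and whenever $f\in{\rm ob}(G)$ and $f\cdot x$ is defined, $f\cdot x = x$. (C2): if $g\cdot x$ is defined then $d(g)\cdot x$ is defined. (C3): if $(g,h)\in G^2$ and $h\cdot x$ is defined, then $(gh)\cdot x$ is defined iff $g\cdot(h\cdot x)$ is defined, and then they are equal. (GR2): if $g\cdot x$ is defined then $g^{-1}\cdot(g\cdot x)$ is defined and equals $x$. (GR3): if $(g,h)\in G^2$ and $g\cdot(h\cdot x)$ is defined, then $(gh)\cdot x$ is defined and equals $g\cdot(h\cdot x)$. *)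

(* A (small) groupoid, given by its set of morphisms [mor]; objects are
   identified with their identity morphisms, so ob(G) is the set of
   morphisms [e] with [dom e = e].  Composition [comp g h] (= g h, "first h
   then g") is a total function but is only meaningful (and only constrained
   by the axioms) when [dom g = cod h]. *)
Record Groupoid := {
  mor :> Type;
  dom : mor -> mor;
  cod : mor -> mor;
  comp : mor -> mor -> mor;
  inv : mor -> mor;
  dom_dom : forall g, dom (dom g) = dom g;
  cod_dom : forall g, cod (dom g) = dom g;
  dom_cod : forall g, dom (cod g) = cod g;
  cod_cod : forall g, cod (cod g) = cod g;
  dom_comp : forall g h, dom g = cod h -> dom (comp g h) = dom h;
  cod_comp : forall g h, dom g = cod h -> cod (comp g h) = cod g;
  comp_assoc : forall g h k, dom g = cod h -> dom h = cod k ->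
      comp g (comp h k) = comp (comp g h) k;
  comp_dom : forall g, comp g (dom g) = g;
  cod_comp_id : forall g, comp (cod g) g = g;
  dom_inv : forall g, dom (inv g) = cod g;
  cod_inv : forall g, cod (inv g) = dom g;
  comp_inv_r : forall g, comp g (inv g) = cod g;
  comp_inv_l : forall g, comp (inv g) g = dom g
}.

Arguments dom {g0} _.
Arguments cod {g0} _.
Arguments comp {g0} _ _.
Arguments inv {g0} _.

Definition is_ob {G : Groupoid} (e : G) : Prop := dom e = e.

Definition partial_act (G : Groupoid) (X : Type) := G -> X -> option X.

Definition defined {G : Groupoid} {X : Type} (a : partial_act G X)
  (g : G) (x : X) : Prop := exists y, a g x = Some y.

(* (C1) = (GR1) *)
Definition ax_C1 {G : Groupoid} {X : Type} (a : partial_act G X) : Prop :=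
  forall x : X,
    (exists e : G, is_ob e /\ defined a e x) /\
    (forall f : G, is_ob f -> defined a f x -> a f x = Some x).

Definition ax_C2 {G : Groupoid} {X : Type} (a : partial_act G X) : Prop :=
  forall (g : G) (x : X), defined a g x -> defined a (dom g) x.

Definition ax_C3 {G : Groupoid} {X : Type} (a : partial_act G X) : Prop :=
  forall (g h : G) (x y : X), dom g = cod h -> a h x = Some y ->
    (defined a (comp g h) x <-> defined a g y) /\
    (defined a g y -> a (comp g h) x = a g y).

Definition ax_GR2 {G : Groupoid} {X : Type} (a : partial_act G X) : Prop :=
  forall (g : G) (x y : X), a g x = Some y -> a (inv g) y = Some x.

Definition ax_GR3 {G : Groupoid} {X : Type} (a : partial_act G X) : Prop :=
  forall (g h : G) (x y z : X), dom g = cod h -> a h x = Some y ->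
    a g y = Some z -> a (comp g h) x = Some z.

Definition partial_category_action {G : Groupoid} {X : Type}
  (a : partial_act G X) : Prop := ax_C1 a /\ ax_C2 a /\ ax_C3 a.

Definition partial_groupoid_action {G : Groupoid} {X : Type}
  (a : partial_act G X) : Prop := ax_C1 a /\ ax_GR2 a /\ ax_GR3 a.


(* (C3) applied to [g^-1] and [g] says that [g^-1] acts on [g x] exactly when
   [dom g = g^-1 g] acts on [x], which it does by (C2), fixing [x] by (C1);
   this gives (GR2), and (GR3) is the easy half of (C3).  Conversely [dom g = g^-1 g]
   turns (GR3) into (C2), and the missing half of (C3) comes from writing
   [g = (g h) h^-1] and acting first by [h^-1] on [h x]. *)

Lemma comp_inv_cancel_r (G : Groupoid) (g h : G) :
  dom g = cod h -> comp (comp g h) (inv h) = g.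
Proof.
  intros Hgh.
  rewrite <- comp_assoc by (rewrite ?cod_inv; auto).
  now rewrite comp_inv_r, <- Hgh, comp_dom.
Qed.

Section PartialActions.

Variables (G : Groupoid) (X : Type) (a : partial_act G X).

Lemma ax_GR2_of_category_action :
  ax_C1 a -> ax_C2 a -> ax_C3 a -> ax_GR2 a.
Proof.
  intros C1 C2 C3 g x y Hgx.
  assert (Hdom_def : defined a (dom g) x) by (apply C2; exists y; exact Hgx).
  assert (Hdom_fix : a (dom g) x = Some x)
    by (apply (proj2 (C1 x)); [apply dom_dom | exact Hdom_def]).
  destruct (C3 (inv g) g x y (dom_inv G g) Hgx) as [Hdef Hval].
  rewrite comp_inv_l in Hdef, Hval.
  rewrite <- Hval by (apply Hdef; exact Hdom_def).
  exact Hdom_fix.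
Qed.

Lemma ax_GR3_of_C3 : ax_C3 a -> ax_GR3 a.
Proof.
  intros C3 g h x y z Hgh Hhx Hgy.
  destruct (C3 g h x y Hgh Hhx) as [_ Hval].
  rewrite Hval by (exists z; exact Hgy).
  exact Hgy.
Qed.

Lemma ax_C2_of_groupoid_action : ax_GR2 a -> ax_GR3 a -> ax_C2 a.
Proof.
  intros GR2 GR3 g x [y Hgx].
  exists x.
  rewrite <- comp_inv_l.
  exact (GR3 (inv g) g x y x (dom_inv G g) Hgx (GR2 _ _ _ Hgx)).
Qed.

Lemma ax_C3_of_groupoid_action : ax_GR2 a -> ax_GR3 a -> ax_C3 a.
Proof.
  intros GR2 GR3 g h x y Hgh Hhx.
  split; [split |].
  - intros [w Hghx].
    exists w.
    assert (Hdom : dom (comp g h) = cod (inv h))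
      by (rewrite dom_comp, cod_inv; auto).
    rewrite <- (comp_inv_cancel_r G g h Hgh).
    exact (GR3 _ _ _ _ _ Hdom (GR2 _ _ _ Hhx) Hghx).
  - intros [z Hgy]. exists z. exact (GR3 g h x y z Hgh Hhx Hgy).
  - intros [z Hgy]. rewrite Hgy. exact (GR3 g h x y z Hgh Hhx Hgy).
Qed.

End PartialActions.

Theorem proposition4p2 (G : Groupoid) (X : Type) (a : partial_act G X) :
  partial_category_action a <-> partial_groupoid_action a.
Proof.
  split.
  - intros (C1 & C2 & C3).
    split; [exact C1 | split].
    + exact (ax_GR2_of_category_action G X a C1 C2 C3).
    + exact (ax_GR3_of_C3 G X a C3).
  - intros (C1 & GR2 & GR3).
    split; [exact C1 | split].
    + exact (ax_C2_of_groupoid_action G X a GR2 GR3).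
    + exact (ax_C3_of_groupoid_action G X a GR2 GR3).
Qed.
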